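(* Let $X$ be a nonempty compact metric space, $Y$ a compact metric space with metric $d_Y$ and $\mathcal Y$ an $(X)$-regularizing family for $Y$. Let $(Z_n)_{n\ge1}$ be a sequence of members of $\mathcal Y$ such that $Z_1$ is arbitrary and, for each $n\ge1$, $Z_{n+1}\subset N_{\mathrm{diam}(Z_n)}(Z_n)$ and $\mathrm{diam}(Z_{n+1})<\tfrac12\mathrm{diam}(Z_n)$. Then $(Z_n)$ converges, and if $p=\lim_nZ_n$ then $$\{p\}\cup\bigcup_{n\ge1}Z_n\subset N_{2\,\mathrm{diam}(Z_1)}(Z_1).$$
   Context: An $(X)$-regularizing family for $Y$ is a countably infinite family $\mathcal Y$ of subsets of $Y$ such that: (a1) the members are pairwise disjoint subspaces homeomorphic to $X$; (a2) $\mathcal Y$ is null (for every $\varepsilon>0$ only finitely many members have diameter $\ge\varepsilon$); (a3) each member has dense complement in $Y$; (a4) $\bigcup\mathcal Y$ is dense in $Y$; (a5) any two points not in a common member of $\mathcal Y$ are separated by an open, closed, $\mathcal Y$-saturated subset of $Y$. Notation: $N_\varepsilon(A)=\{x\in Y:d_Y(x,A)<\varepsilon\}$, $\mathrm{diam}(A)=\sup\{d_Y(x,y):x,y\in A\}$. A sequence $(Z_n)$ of pairwise distinct members of $\mathcal Y$ converges to $p$ (written $p=\lim_nZ_n$) if $p_n\to p$ for some (equivalently any) choice $p_n\in Z_n$. *)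

From HB Require Import structures.
From mathcomp Require Import all_boot all_order all_algebra.
From mathcomp Require Import all_classical all_reals all_analysis.
Set Implicit Arguments. Unset Strict Implicit. Unset Printing Implicit Defensive.
Import Order.TTheory GRing.Theory Num.Theory.
Local Open Scope classical_set_scope.
Local Open Scope ring_scope.

Section Defs.
Context {R : realType}.

Definition diam (Y : metricType R) (A : set Y) : R :=
  sup [set mdist x y | x in A & y in A].

Definition dist_set (Y : metricType R) (x : Y) (A : set Y) : R :=
  inf [set mdist x a | a in A].

Definition Nbhd (Y : metricType R) (eps : R) (A : set Y) : set Y :=
  [set x | dist_set x A < eps].

Definition homeomorphic_to (X Y : metricType R) (Z : set Y) : Prop :=
  exists (f : X -> Y) (g : Y -> X),
    continuous f /\ f @` setT = Z /\ (forall x, g (f x) = x) /\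
    {within Z, continuous g}.

Definition saturated (Y : metricType R) (F : set (set Y)) (U : set Y) : Prop :=
  forall Z, F Z -> Z `&` U !=set0 -> Z `<=` U.

Definition regularizing_family (X Y : metricType R) (F : set (set Y)) : Prop :=
  (countable F /\ infinite_set F) /\ [/\
      (forall Z, F Z -> homeomorphic_to X Z) /\
      (forall Z Z', F Z -> F Z' -> Z <> Z' -> Z `&` Z' = set0),
      (forall eps : R, 0 < eps -> finite_set [set Z | F Z /\ eps <= diam Z]),
      (forall Z, F Z -> dense (~` Z)),
      dense (\bigcup_(Z in F) Z) &
      (forall p q : Y, p <> q -> ~ (exists Z, [/\ F Z, Z p & Z q]) ->
         exists U : set Y, [/\ open U, closed U, saturated F U, U p & (~ U q)])].

Definition family_seq_cvg_to (Y : metricType R) (F : set (set Y))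
    (Z : nat -> set Y) (p : Y) : Prop :=
  (forall n, F (Z n)) /\ injective Z /\
  exists pn : nat -> Y, (forall n, Z n (pn n)) /\ pn @ \oo --> p.

End Defs.

From HB Require Import structures.
From mathcomp Require Import all_boot all_order all_algebra.
From mathcomp Require Import all_classical all_reals all_analysis.
From mathcomp Require Import lra.
Import Order.TTheory GRing.Theory Num.Theory.
Local Open Scope classical_set_scope.
Local Open Scope ring_scope.

(* Write D n for diam (Z n).  Every point of Z (n+1) is within D n of Z n and
   D (n+1) < D n / 2, so telescoping puts every point of Z (n+k) within
   2 D n - 2 D (n+k) of Z n.  Hence any choice p n in Z n is Cauchy, with
   d(p n, p m) <= 4 D n, and converges in the compact space Y.  From Z 1 on,
   the bound starts at D 0 + 2 D 1, which is strictly below 2 D 0; the gap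
   D 0 - 2 D 1 absorbs the passage to the limit. *)

Section CompactMetric.
Context {R : realType} {Y : metricType R}.

Lemma mdist_continuous (y : Y) : continuous (fun z : Y => (mdist y z : R^o)).
Proof.
move=> z; apply/cvgrPdist_lt => e e0.
apply: filterS (nbhsx_ballx z e e0) => t; rewrite ballEmdist /= => zt.
have := metric_triangle y z t; have := metric_triangle y t z.
by rewrite (metric_sym t z) ltr_distlC => ? ?; apply/andP; split; lra.
Qed.

Lemma compact_mdist_bounded :
  compact [set: Y] -> exists M : R, forall x y : Y, mdist x y <= M.
Proof.
move=> cY; have [[y _]|Y0] := pselect (exists y : Y, True); last first.
  by exists 0 => x; exfalso; apply: Y0; exists x.
have /compact_bounded[N [_ bN]] :=
  continuous_compact (continuous_subspaceT (mdist_continuous y)) cY.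
have {}bN : globally (range (mdist y)) [set r : R | `|r| <= `|N| + 1].
  by apply: bN; rewrite (le_lt_trans (ler_norm N)) // ltrDl.
have dyle x : mdist y x <= `|N| + 1.
  by rewrite -[X in X <= _]ger0_norm ?mdist_ge0 //; apply: bN; exists x.
exists (2 * (`|N| + 1)) => x z.
have := metric_triangle x y z; rewrite (metric_sym x y).
by have := dyle x; have := dyle z; lra.
Qed.

Lemma cauchy_cluster_cvg {u : nat -> Y} {p : Y} :
  (forall e, 0 < e -> exists N, forall n, (N <= n)%N -> mdist (u N) (u n) < e) ->
  cluster (u @ \oo) p -> u @ \oo --> p.
Proof.
move=> cu clu; apply/cvg_ballP => e e0.
have e30 : 0 < e / 3 by rewrite divr_gt0.
have [N uN] := cu _ e30.
have [_ [[m Nm <-] pum]] :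
    (u @` [set n | (N <= n)%N] `&` ball p (e / 3)) !=set0.
  apply: clu; last exact: nbhsx_ballx.
  by exists N => // n Nn; exists n.
exists N => // n Nn /=; rewrite ballEmdist /=; move: pum; rewrite ballEmdist /=.
have := metric_triangle p (u m) (u n); have := metric_triangle (u m) (u N) (u n).
by rewrite (metric_sym (u m) (u N)); have := uN m Nm; have := uN n Nn; lra.
Qed.

End CompactMetric.

Section DistSet.
Context {R : realType} {Y : metricType R}.

Lemma dist_set_le_mdist {A : set Y} x {a} : A a -> dist_set x A <= mdist x a.
Proof.
move=> Aa; apply: ge_inf; last by exists a.
by exists 0 => _ [b _ <-]; apply: mdist_ge0.
Qed.

Lemma dist_set_ltP {A : set Y} {x e} : A !=set0 -> dist_set x A < e ->
  exists2 a, A a & mdist x a < e.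
Proof.
move=> [a0 Aa0] /inf_lt[]; first by exists (mdist x a0), a0.
by move=> _ [a Aa <-]; exists a.
Qed.

Lemma dist_set_triangle {A : set Y} x y : A !=set0 ->
  dist_set x A <= mdist x y + dist_set y A.
Proof.
move=> [a0 Aa0]; rewrite -lerBlDl; apply: lb_le_inf; first by exists (mdist y a0), a0.
move=> _ [a Aa <-]; rewrite lerBlDl.
exact: le_trans (dist_set_le_mdist x Aa) (metric_triangle x y a).
Qed.

End DistSet.

Section BoundedMetric.
Context {R : realType} {Y : metricType R}.
Context {M : R}.
Hypothesis mdist_le_M : forall x y : Y, mdist x y <= M.

Lemma mdist_le_diam {A : set Y} {x y} : A x -> A y -> mdist x y <= diam A.
Proof.
move=> Ax Ay; apply: ub_le_sup; last by exists x => //; exists y.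
by exists M => _ [a _ [b _ <-]].
Qed.

Lemma diam_ge0 {A : set Y} {x} : A x -> 0 <= diam A.
Proof. by move=> Ax; rewrite -(mdistxx x); apply: mdist_le_diam. Qed.

End BoundedMetric.

Lemma homeomorphic_to_nonempty {R : realType} (X Y : metricType R) (Z : set Y) :
  X -> homeomorphic_to X Z -> Z !=set0.
Proof. by move=> x [f [_ [_ [<- _]]]]; exists (f x), x. Qed.

Section HalvingSequence.
Context {R : realType} {Y : metricType R}.
Context {M : R}.
Hypothesis mdist_le_M : forall x y : Y, mdist x y <= M.
Context {Z : nat -> set Y}.
Hypothesis Z_neq0 : forall n, Z n !=set0.
Hypothesis Z_sub : forall n, Z n.+1 `<=` Nbhd (diam (Z n)) (Z n).
Hypothesis diam_halves : forall n, diam (Z n.+1) < diam (Z n) / 2.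

Local Notation D n := (diam (Z n)).

Let D_ge0 n : 0 <= D n.
Proof. by have [z Zz] := Z_neq0 n; exact: (diam_ge0 mdist_le_M Zz). Qed.

Lemma diam_seq_gt0 n : 0 < D n.
Proof. by have := D_ge0 n.+1; have := diam_halves n; lra. Qed.

Lemma diam_seq_ltn m n : (m < n)%N -> D n < D m.
Proof.
elim: n => // n IH; rewrite ltnS leq_eqVlt => /predU1P[<-|/IH Dnm].
  by have := diam_halves m; have := D_ge0 m; lra.
by have := diam_halves n; have := D_ge0 n; lra.
Qed.

Lemma halving_seq_inj : injective Z.
Proof.
move=> m n Zmn; apply/eqP; apply: contraT; rewrite neq_ltn.
by case/orP => /diam_seq_ltn; rewrite Zmn ltxx.
Qed.

Lemma dist_set_halving_seq {A : set Y} {c} n : A !=set0 ->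
  (forall x, Z n x -> dist_set x A <= c - 2 * D n) ->
  forall k x, Z (n + k)%N x -> dist_set x A <= c - 2 * D (n + k)%N.
Proof.
move=> A0 Zn; elim=> [|k IH] x; first by rewrite addn0; apply: Zn.
rewrite addnS => /Z_sub /dist_set_ltP-/(_ (Z_neq0 _))[y Zy xy].
have := dist_set_triangle x y A0; have := IH y Zy.
by have := diam_halves (n + k)%N; lra.
Qed.

Lemma dist_set_seq_le n k {x} :
  Z (n + k)%N x -> dist_set x (Z n) <= 2 * D n - 2 * D (n + k)%N.
Proof.
apply: (dist_set_halving_seq n (Z_neq0 n)) => y Zy.
by have := dist_set_le_mdist y Zy; rewrite mdistxx; lra.
Qed.

Lemma dist_set_seq0_le {k x} :
  Z k.+1 x -> dist_set x (Z 0%N) <= D 0%N + 2 * D 1%N - 2 * D k.+1.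
Proof.
by apply: (dist_set_halving_seq 1 (Z_neq0 0) _ k) => y /Z_sub; rewrite /Nbhd/=; lra.
Qed.

Section Selection.
Context {u : nat -> Y}.
Hypothesis u_in_Z : forall n, Z n (u n).

Lemma mdist_selection_le {n m} : (n <= m)%N -> mdist (u n) (u m) <= 4 * D n.
Proof.
move=> nm; have := dist_set_seq_le n (m - n) (x := u m).
rewrite subnKC // => /(_ (u_in_Z m)) um.
have [a Za uma] : exists2 a, Z n a & mdist (u m) a < 3 * D n.
  by apply: dist_set_ltP => //; have := D_ge0 m; have := diam_seq_gt0 n; lra.
have := metric_triangle (u n) a (u m); rewrite (metric_sym a (u m)).
by have := mdist_le_diam mdist_le_M (u_in_Z n) Za; lra.
Qed.

Lemma diam_seq_mulSn_le n : D n * n.+1%:R <= D 0%N.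
Proof.
elim: n => [|n IH]; first by rewrite mulr1.
rewrite -[n.+2]addn2 natrD; move: IH; rewrite -[n.+1 in X in X <= _]addn1 natrD.
by have := diam_halves n; have := D_ge0 n; have : (0 : R) <= n%:R by []; nra.
Qed.

Lemma selection_cauchy e : 0 < e ->
  exists N, forall n, (N <= n)%N -> mdist (u N) (u n) < e.
Proof.
move=> e0; pose N := Num.truncn (4 * D 0%N / e); exists N => n Nn.
have := truncnS_gt (4 * D 0%N / e); rewrite -/N ltr_pdivrMr // => DN.
have := mdist_selection_le Nn; have := diam_seq_mulSn_le N.
by have : (0 : R) < N.+1%:R by []; nra.
Qed.

Lemma limit_selection_dist_set_lt {p} : u @ \oo --> p ->
  dist_set p (Z 0%N) < 2 * D 0%N.
Proof.
have gap : 0 < D 0%N - 2 * D 1%N by have := diam_halves 0; lra.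
move=> /cvg_ballP/(_ _ gap)[N _ /(_ N.+1 (leqnSn N))].
rewrite /= ballEmdist /= => pu.
have := dist_set_seq0_le (u_in_Z N.+1).
have := dist_set_triangle p (u N.+1) (Z_neq0 0).
by have := D_ge0 N.+1; lra.
Qed.

End Selection.

Lemma halving_seq_dist_set_lt {n x} : Z n x -> dist_set x (Z 0%N) < 2 * D 0%N.
Proof.
case: n => [|k] Zx; last first.
  by have := dist_set_seq0_le Zx; have := D_ge0 k.+1; have := diam_halves 0; lra.
by have := dist_set_le_mdist x Zx; rewrite mdistxx; have := diam_seq_gt0 0; lra.
Qed.

End HalvingSequence.

Theorem lemma2 (R : realType) (X Y : metricType R) (F : set (set Y))
  (x0 : X) (cX : compact [set: X]) (cY : compact [set: Y])
  (hF : regularizing_family X F)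
  (Z : nat -> set Y)
  (hZ : forall n, F (Z n))
  (hsub : forall n, Z n.+1 `<=` Nbhd (diam (Z n)) (Z n))
  (hdiam : forall n, diam (Z n.+1) < diam (Z n) / 2) :
  (exists p : Y, family_seq_cvg_to F Z p) /\
  (forall p : Y, family_seq_cvg_to F Z p ->
     [set p] `|` \bigcup_n Z n `<=` Nbhd (2 * diam (Z 0%N)) (Z 0%N)).
Proof.
have [M dleM] := compact_mdist_bounded cY.
have Z_neq0 n : Z n !=set0.
  by case: hF => _ [[homeo _] _ _ _ _]; exact: homeomorphic_to_nonempty x0 (homeo _ _).
have Zinj := halving_seq_inj dleM Z_neq0 hdiam.
split.
  have [u uZ] := choice Z_neq0.
  have [p [_ clu]] := cY (u @ \oo) _ filterT.
  exists p; split=> //; split=> //; exists u; split=> //.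
  exact: cauchy_cluster_cvg (selection_cauchy dleM Z_neq0 hsub hdiam uZ) clu.
move=> p [_ [_ [u [uZ up]]]] y [->|[n _ Zy]].
  exact: (limit_selection_dist_set_lt dleM Z_neq0 hsub hdiam uZ up).
exact: (halving_seq_dist_set_lt dleM Z_neq0 hsub hdiam Zy).
Qed.
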